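(* Let $\mathbb{N}$ be a strongly connected directed graph on vertices $\{1,\dots,m\}$, fix $q\in\{1,\dots,m\}$ and let $b_q$ be the $q$th unit vector of $\mathbb{R}^m$. Then there exists $G=[g_{ij}]\in\mathbb{R}^{m\times m}$ with all row sums equal to zero and with $g_{ij}=0$ whenever $j$ is not a neighbor of $i$ (i.e., whenever $j\neq i$ and there is no arc from $j$ to $i$ in $\mathbb{N}$), such that $(G,b_q)$ is a controllable pair.
   Context: In the neighbor graph, an arc from $j$ to $i$ means agent $j$ is a neighbor of agent $i$; every agent is considered a neighbor of itself. *)

From mathcomp Require Import all_boot all_order all_algebra.
From mathcomp Require Import reals.
Set Implicit Arguments. Unset Strict Implicit. Unset Printing Implicit Defensive.
Import Order.TTheory GRing.Theory Num.Theory.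
Local Open Scope ring_scope.

(* Directed graph on vertices 'I_m given by arc relation: [e j i] means there is
   an arc from j to i, i.e. j is a neighbor of i. *)
Definition strongly_connected (m : nat) (e : rel 'I_m) : Prop :=
  forall i j : 'I_m, connect e i j.

Definition neighbor (m : nat) (e : rel 'I_m) (i j : 'I_m) : bool :=
  (j == i) || e j i.

Definition ctrb_mx (R : comNzRingType) (m : nat) (A : 'M[R]_m) (b : 'cV[R]_m)
  : 'M[R]_(m, m) :=
  \matrix_(i < m, k < m) ((A ^+ k) *m b) i ord0.

Definition controllable_pair (R : fieldType) (m : nat) (A : 'M[R]_m) (b : 'cV[R]_m)
  : Prop := \rank (ctrb_mx A b) = m.

Definition unit_cV (R : comNzRingType) (m : nat) (q : 'I_m) : 'cV[R]_m :=
  \col_(i < m) (i == q)%:R.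

From mathcomp Require Import all_boot all_order all_algebra.
From mathcomp Require Import reals ring.
Set Implicit Arguments. Unset Strict Implicit. Unset Printing Implicit Defensive.
Import Order.TTheory GRing.Theory Num.Theory.
Local Open Scope ring_scope.

(* Take a spanning tree of the graph directed away from q, with parent map p,
   and pairwise distinct weights d with d q = 0, and let G = diag(d) (I - P)
   where P is the matrix of p: row i of G is d_i (e_i - e_(p i)).  Removing the leaves of the tree one at a
   time shows that prod_i (X - d_i) annihilates G, so by a Hautus-type test it
   is enough that no left eigenvector y of G vanishes at q.  If y G = d_v y then
   y vanishes off the path from v to q (at a highest vertex off that path where
   y is nonzero, the eigenvalue equation would force a nonzero child), and along
   the path each nonzero entry forces the next one, up to q. *)

Lemma mulmx_unit_cV (R : comNzRingType) m (x : 'rV[R]_m) (q : 'I_m) :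
  (x *m unit_cV R q) 0 0 = x 0 q.
Proof.
rewrite mxE (bigD1 q) //= mxE eqxx mulr1 big1 ?addr0 // => j /negbTE j_neq_q.
by rewrite mxE j_neq_q mulr0.
Qed.

Section Hautus.

Variables (F : fieldType) (n : nat) (A : 'M[F]_n.+1) (b : 'cV[F]_n.+1).

Lemma controllable_pair_krylov :
  (forall w : 'rV_n.+1, (forall k, (k <= n)%N -> w *m A ^+ k *m b = 0) -> w = 0) ->
  controllable_pair A b.
Proof.
move=> krylov; apply/eqP; rewrite -[_ == _]/(row_free _) row_free_unit unitmxE unitfE.
apply/negP => /det0P[w /eqP w_neq0 wC]; apply/w_neq0/krylov => k le_kn.
have /rowP/(_ (Ordinal (le_kn : (k < n.+1)%N))) := wC; rewrite !mxE => wCk.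
apply/rowP => i; rewrite ord1 -mulmxA !mxE -[RHS]wCk; apply: eq_bigr => j _.
by rewrite /ctrb_mx [in RHS]mxE.
Qed.

Lemma horner_mx_krylov (w : 'rV_n.+1) (P : {poly F}) :
  (forall k, (k < size P)%N -> w *m A ^+ k *m b = 0) ->
  w *m horner_mx A P *m b = 0.
Proof.
move=> krylov; rewrite -[P]coefK poly_def rmorph_sum /= mulmx_sumr mulmx_suml.
apply: big1 => k _; rewrite horner_mxZ rmorphXn /= horner_mx_X.
by rewrite -scalemxAr -scalemxAl krylov ?scaler0.
Qed.

Lemma left_eigen_of_split_annihilator (s : seq F) (w : 'rV_n.+1) :
  w != 0 -> w *m horner_mx A (\prod_(c <- s) ('X - c%:P)) = 0 ->
  exists P : {poly F}, exists2 c, c \in s &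
    [/\ (size P <= size s)%N, w *m horner_mx A P != 0 &
        w *m horner_mx A P *m A = c *: (w *m horner_mx A P)].
Proof.
elim: s w => [|c s IH] w w_neq0.
  by rewrite big_nil rmorph1 mulmx1 => /eqP; rewrite (negbTE w_neq0).
rewrite big_cons rmorphM rmorphB /= horner_mx_X horner_mx_C -mulmxE mulmxA.
have [wAc_eq0 _ | wAc_neq0 /(IH _ wAc_neq0)] := eqVneq (w *m (A - c%:M)) 0.
  exists 1, c; rewrite ?mem_head // rmorph1 mulmx1 size_poly1; split => //.
  by apply/eqP; rewrite -subr_eq0 -mul_mx_scalar -mulmxBr wAc_eq0.
move=> [P [c' c's [size_P nz eig]]].
exists (('X - c%:P) * P), c'; first by rewrite inE c's orbT.
have P_neq0 : P != 0 by apply: contraNneq nz => ->; rewrite rmorph0 mulmx0.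
rewrite rmorphM rmorphB /= horner_mx_X horner_mx_C -mulmxE mulmxA.
by rewrite size_mul ?polyXsubC_eq0 ?size_XsubC.
Qed.

Lemma controllable_pair_left_eigen (s : seq F) :
  (size s <= n.+1)%N -> horner_mx A (\prod_(c <- s) ('X - c%:P)) = 0 ->
  (forall c (y : 'rV_n.+1), c \in s -> y != 0 -> y *m A = c *: y -> y *m b != 0) ->
  controllable_pair A b.
Proof.
move=> size_s annih eigen_b; apply: controllable_pair_krylov => w krylov.
have [//|w_neq0] := eqVneq w 0; exfalso.
have wP0 : w *m horner_mx A (\prod_(c <- s) ('X - c%:P)) = 0 by rewrite annih mulmx0.
have [P [c s_c [size_P yP_neq0 yP_eigen]]] := left_eigen_of_split_annihilator w_neq0 wP0.
apply/negP: (eigen_b c _ s_c yP_neq0 yP_eigen).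
rewrite negbK; apply/eqP/horner_mx_krylov => k lt_kP; apply: krylov.
by rewrite -ltnS (leq_trans lt_kP) ?(leq_trans size_P).
Qed.

End Hautus.

Lemma spanning_tree (T : finType) (e : rel T) (q : T) :
  (forall z, connect e q z) ->
  exists p : T -> T, exists depth : T -> nat,
    p q = q /\ forall z, z != q -> e (p z) z /\ (depth (p z) < depth z)%N.
Proof.
move=> reach_q.
have reach z : exists k, [exists s : k.-tuple T, path e q s && (last q s == z)].
  have /connectP[s e_s ->] := reach_q z; exists (size s); apply/existsP.
  by exists (in_tuple s); rewrite /= e_s eqxx.
pose depth z := ex_minn (reach z).
have depth_min (s : seq T) : path e q s -> (depth (last q s) <= size s)%N.
  move=> e_s; rewrite /depth; case: ex_minnP => k _; apply; apply/existsP.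
  by exists (in_tuple s); rewrite /= e_s eqxx.
have parent z : z != q -> exists u, e u z && (depth u < depth z)%N.
  have [s /andP[]] : exists s : (depth z).-tuple T, path e q s && (last q s == z).
    by rewrite /depth; case: ex_minnP => k /existsP.
  case/lastP: (tval s) (size_tuple s) => [|t u] /=; first by move=> _ _ /eqP->; rewrite eqxx.
  rewrite size_rcons rcons_path last_rcons => <- /andP[e_t e_u] /eqP<- _.
  by exists (last q t); rewrite e_u ltnS depth_min.
pose p z := if z == q then q else odflt q [pick u | e u z && (depth u < depth z)%N].
exists p, depth.
rewrite /p eqxx; split=> // z z_neq_q; rewrite (negbTE z_neq_q).
case: pickP => [u /andP[]//| no_parent].
by have [u] := parent z z_neq_q; rewrite no_parent.
Qed.

Lemma fconnect_total (T : finType) (f : T -> T) v x y :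
  fconnect f v x -> fconnect f v y -> fconnect f x y || fconnect f y x.
Proof.
move=> /iter_findex<- /iter_findex<-.
have le_iter i j : (i <= j)%N -> fconnect f (iter i f v) (iter j f v).
  by move=> le_ij; rewrite -(subnK le_ij) iterD fconnect_iter.
case: (leqP (findex f v x) (findex f v y)) => [/le_iter -> // | /ltnW /le_iter ->].
by rewrite orbT.
Qed.

Section RootedTree.

Variables (T : finType) (q : T) (p : T -> T) (depth : T -> nat).
Hypotheses (p_root : p q = q) (depth_parent : forall z, z != q -> (depth (p z) < depth z)%N).

Lemma depth_parent_le z : (depth (p z) <= depth z)%N.
Proof. by have [->|/depth_parent/ltnW//] := eqVneq z q; rewrite p_root. Qed.

Lemma depth_fconnect x y : fconnect p x y -> (depth y <= depth x)%N.
Proof.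
move=> /iter_findex<-; elim: (findex p x y) => [|k IH] //=.
exact: leq_trans (depth_parent_le _) IH.
Qed.

Lemma parent_inj_fconnect v x y :
  fconnect p v x -> fconnect p v y -> x != q -> y != q -> p x = p y -> x = y.
Proof.
move=> vx vy; wlog xy : x y vx vy / fconnect p x y.
  move=> W x_neq_q y_neq_q pxy; case/orP: (fconnect_total vx vy) => [xy|yx].
    exact: W.
  by apply/esym/W.
move=> _ y_neq_q pxy; move: xy; rewrite fconnect_eqVf pxy => /orP[/eqP//|/depth_fconnect].
by rewrite leqNgt depth_parent.
Qed.

End RootedTree.

Section TreeMatrix.

Variables (F : fieldType) (n : nat) (q : 'I_n.+1) (p : 'I_n.+1 -> 'I_n.+1).
Variables (depth : 'I_n.+1 -> nat) (d : 'I_n.+1 -> F).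
Hypotheses (p_root : p q = q) (depth_parent : forall z, z != q -> (depth (p z) < depth z)%N).
Hypotheses (d_inj : injective d) (d_root : d q = 0).

Definition tree_mx : 'M[F]_n.+1 := \matrix_(i, j) (d i * ((i == j)%:R - (p i == j)%:R)).

Lemma tree_mx_row_sum i : \sum_j tree_mx i j = 0.
Proof.
have sum_delta k : \sum_j (k == j)%:R = 1 :> F.
  by rewrite (bigD1 k) //= eqxx big1 ?addr0 // => j /negbTE; rewrite eq_sym => ->.
by under eq_bigr do rewrite mxE; rewrite -mulr_sumr sumrB !sum_delta subrr mulr0.
Qed.

Lemma tree_mx_eq0 i j : j != i -> j != p i -> tree_mx i j = 0.
Proof. by rewrite mxE ![_ == j]eq_sym => /negbTE-> /negbTE->; rewrite subrr mulr0. Qed.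

Lemma row_mul_tree_mx (x : 'rV_n.+1) a :
  (x *m tree_mx) 0 a = d a * x 0 a - \sum_(i | p i == a) d i * x 0 i.
Proof.
have -> : d a * x 0 a = \sum_(i | i == a) d i * x 0 i by rewrite big_pred1_eq.
rewrite [X in X - _]big_mkcond [X in _ - X]big_mkcond -sumrB mxE.
by apply: eq_bigr => i _; rewrite mxE; case: (i == a); case: (p i == a) => /=; ring.
Qed.

Lemma left_eigen_tree_mx_eq c (y : 'rV_n.+1) a :
  y *m tree_mx = c *: y -> \sum_(i | p i == a) d i * y 0 i = (d a - c) * y 0 a.
Proof.
move=> /rowP/(_ a); rewrite row_mul_tree_mx mxE => eig.
by rewrite mulrBl -eig; ring.
Qed.

Lemma mul_tree_mx_sub_leaf (S : {set 'I_n.+1}) (x : 'rV_n.+1) v :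
  (forall z, z \in S -> p z \in S) -> (forall a, a \notin S -> x 0 a = 0) ->
  v \in S -> (forall z, z \in S -> (depth z <= depth v)%N) ->
  forall a, a \notin S :\ v -> (x *m (tree_mx - (d v)%:M)) 0 a = 0.
Proof.
move=> S_closed x_supp vS v_max a a_notin.
have no_child : \sum_(i | p i == a) d i * x 0 i = 0.
  apply: big1 => i /eqP pia.
  have [->|xi_neq0] := eqVneq (x 0 i) 0; first by rewrite mulr0.
  have [->|i_neq_q] := eqVneq i q; first by rewrite d_root mul0r.
  have iS : i \in S by apply: contraTT xi_neq0 => /x_supp->; rewrite eqxx.
  move: a_notin; rewrite !inE -pia S_closed // andbT negbK => /eqP pi_v.
  by have := v_max i iS; rewrite -pi_v leqNgt depth_parent.
rewrite mulmxBr mul_mx_scalar mxE row_mul_tree_mx no_child subr0 !mxE.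
have [aS|/x_supp->] := boolP (a \in S); last by rewrite !mulr0 subrr.
by move: a_notin; rewrite !inE aS andbT negbK => /eqP->; rewrite subrr.
Qed.

Lemma mulmx_horner_tree_mx_closed (S : {set 'I_n.+1}) (x : 'rV_n.+1) :
  (forall z, z \in S -> p z \in S) -> (forall a, a \notin S -> x 0 a = 0) ->
  x *m horner_mx tree_mx (\prod_(i in S) ('X - (d i)%:P)) = 0.
Proof.
have [k] := ubnP #|S|; elim: k S x => // k IH S x card_S S_closed x_supp.
have [S0 | [v0 v0S]] := set_0Vmem S.
  have -> : x = 0 by apply/rowP => a; rewrite mxE x_supp // S0 inE.
  by rewrite mul0mx.
have [v vS v_max] := arg_maxnP depth v0S.
rewrite (bigD1 v) //= rmorphM rmorphB /= horner_mx_X horner_mx_C -mulmxE mulmxA.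
rewrite (eq_bigl (mem (S :\ v))) => [|i]; last by rewrite !inE andbC.
apply: IH; first by move: card_S; rewrite (cardsD1 v) [v \in S]vS.
  move=> z; rewrite !inE => /andP[z_neq_v zS]; rewrite S_closed // andbT.
  apply: contraNneq z_neq_v => pz_v.
  have [z_q|z_neq_q] := eqVneq z q; first by rewrite -pz_v z_q p_root.
  by have := v_max z zS; rewrite /= -pz_v leqNgt depth_parent.
exact: mul_tree_mx_sub_leaf.
Qed.

Lemma horner_tree_mx : horner_mx tree_mx (\prod_i ('X - (d i)%:P)) = 0.
Proof.
apply/row_matrixP => i; rewrite row0 rowE (eq_bigl (mem [set: 'I_n.+1])) => [|j].
  by apply: mulmx_horner_tree_mx_closed => [z _|a]; rewrite in_setT.
by rewrite /= in_setT.
Qed.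

Lemma left_eigen_tree_mx_supp v (y : 'rV_n.+1) a :
  y *m tree_mx = d v *: y -> y 0 a != 0 -> fconnect p v a.
Proof.
move=> eig ya_neq0; apply: contraT => v_not_a.
pose P b := (y 0 b != 0) && ~~ fconnect p v b.
have Pa : P a by rewrite /P ya_neq0.
have [b /andP[yb_neq0 v_not_b] b_max] := arg_maxnP depth Pa.
have b_neq_v : b != v by apply: contraNneq v_not_b => ->; apply: connect0.
have /negP[] : \sum_(i | p i == b) d i * y 0 i != 0.
  by rewrite (left_eigen_tree_mx_eq b eig) mulf_neq0 // subr_eq0 (inj_eq d_inj).
apply/eqP/big1 => i /eqP pib.
have [->|yi_neq0] := eqVneq (y 0 i) 0; first by rewrite mulr0.
have [->|i_neq_q] := eqVneq i q; first by rewrite d_root mul0r.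
have v_not_i : ~~ fconnect p v i.
  by apply: contra v_not_b => vi; rewrite -pib (connect_trans vi (fconnect1 p i)).
have := b_max i; rewrite /P yi_neq0 v_not_i => /(_ isT).
by rewrite /= -pib leqNgt depth_parent.
Qed.

Lemma left_eigen_tree_mx_parent v (y : 'rV_n.+1) a :
  y *m tree_mx = d v *: y -> fconnect p v a -> a != q -> y 0 a != 0 ->
  y 0 (p a) != 0.
Proof.
move=> eig va a_neq_q ya_neq0.
have : (d (p a) - d v) * y 0 (p a) = d a * y 0 a.
  rewrite -(left_eigen_tree_mx_eq _ eig) (bigD1 a) //= big1 ?addr0 //.
  move=> i /andP[/eqP pia i_neq_a].
  have [->|yi_neq0] := eqVneq (y 0 i) 0; first by rewrite mulr0.
  have [->|i_neq_q] := eqVneq i q; first by rewrite d_root mul0r.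
  case/eqP: i_neq_a; apply: (parent_inj_fconnect p_root depth_parent _ va) => //.
  exact: left_eigen_tree_mx_supp eig yi_neq0.
move=> /eqP; apply: contraTneq => ->.
by rewrite mulr0 eq_sym mulf_neq0 // -d_root (inj_eq d_inj).
Qed.

Lemma left_eigen_tree_mx_root v (y : 'rV_n.+1) :
  y != 0 -> y *m tree_mx = d v *: y -> y 0 q != 0.
Proof.
move=> y_neq0 eig; have [a ya_neq0] : exists a, y 0 a != 0.
  case: (pickP [pred a | y 0 a != 0]) => [a ya|y0]; first by exists a.
  by case/eqP: y_neq0; apply/rowP => a; rewrite mxE; apply/eqP/negbFE/y0.
have va := left_eigen_tree_mx_supp eig ya_neq0.
have [k] := ubnP (depth a); elim: k a va ya_neq0 => // k IH a va ya_neq0 ha.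
have [<- //|a_neq_q] := eqVneq a q.
apply: (IH (p a)); first exact: connect_trans va (fconnect1 p a).
  exact: left_eigen_tree_mx_parent eig va a_neq_q ya_neq0.
exact: leq_trans (depth_parent a_neq_q) ha.
Qed.

Lemma controllable_tree_mx : controllable_pair tree_mx (unit_cV F q).
Proof.
apply: (@controllable_pair_left_eigen _ _ _ _ [seq d i | i <- enum 'I_n.+1]).
- by rewrite size_map size_enum_ord.
- by rewrite big_map big_enum horner_tree_mx.
move=> _ y /mapP[v _ ->] y_neq0 eig.
apply: contraNneq (left_eigen_tree_mx_root y_neq0 eig) => yb0.
by rewrite -mulmx_unit_cV yb0 mxE.
Qed.

End TreeMatrix.

Theorem lemma2 (R : realType) (m : nat) (e : rel 'I_m) (q : 'I_m) :
  strongly_connected e ->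
  exists G : 'M[R]_m,
    (forall i : 'I_m, \sum_(j < m) G i j = 0) /\
    (forall i j : 'I_m, ~~ neighbor e i j -> G i j = 0) /\
    controllable_pair G (unit_cV R q).
Proof.
case: m e q => [|n] e q sc; first by case: q.
have [p [depth [p_root parent]]] := spanning_tree (sc q).
pose d (i : 'I_n.+1) : R := i%:R - q%:R.
have d_inj : injective d by move=> i j /addIr/eqP; rewrite eqr_nat => /eqP/val_inj.
exists (tree_mx p d); split; first exact: tree_mx_row_sum.
split.
  move=> i j; rewrite /neighbor negb_or => /andP[j_neq_i /negP not_eji].
  apply: tree_mx_eq0 => //; have [i_q|i_neq_q] := eqVneq i q.
    by rewrite i_q p_root -i_q.
  by apply/eqP => j_pi; apply: not_eji; rewrite j_pi; case: (parent i i_neq_q).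
apply: (controllable_tree_mx (depth := depth) p_root _ d_inj) => [z /parent[]//|].
by rewrite /d subrr.
Qed.
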